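(* For $4-2\sqrt3<p\leq1$, the set $\mathcal{S}(p)$ is empty; that is, there is no $3\times3$ matrix $A=(A_{ij})_{i,j\in[3]}$ with nonnegative entries satisfying all of: (1) $A_{11}+A_{22}+p\leq\sum_{i,j}A_{ij}\leq1$; (2) $A_{1j}\geq\frac12\sum_iA_{ij}$ for all $j\in[3]$, and $A_{i1}\geq\frac12\sum_jA_{ij}$ for all $i\in[3]$; (3) $(A_{1j})^2+(A_{2j})^2\geq p\left(\sum_iA_{ij}\right)^2$ for all $j\in[3]$; (4) $(A_{i1})^2+(A_{i2})^2\geq p\left(\sum_jA_{ij}\right)^2$ for all $i\in[3]$.
   Context: $\mathcal{S}(p)$ denotes the collection of $3\times3$ nonnegative matrices satisfying conditions (1)–(4). *)

From HB Require Import structures.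
From mathcomp Require Import all_boot all_order all_algebra.
Set Implicit Arguments. Unset Strict Implicit. Unset Printing Implicit Defensive.
Import Order.TTheory GRing.Theory Num.Theory.
Local Open Scope ring_scope.

(* Indices 1,2,3 of the paper are 0,1,2 : 'I_3 here. *)
Definition colsum (R : pzRingType) (A : 'M[R]_3) (j : 'I_3) := \sum_(i < 3) A i j.
Definition rowsum (R : pzRingType) (A : 'M[R]_3) (i : 'I_3) := \sum_(j < 3) A i j.
Definition totsum (R : pzRingType) (A : 'M[R]_3) := \sum_(i < 3) \sum_(j < 3) A i j.

Definition in_S (R : realFieldType) (p : R) (A : 'M[R]_3) : Prop :=
  (forall i j, 0 <= A i j) /\
  (A 0 0 + A 1 1 + p <= totsum A /\ totsum A <= 1) /\
  (forall j, A 0 j >= colsum A j / 2) /\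
  (forall i, A i 0 >= rowsum A i / 2) /\
  (forall j, A 0 j ^+ 2 + A 1 j ^+ 2 >= p * colsum A j ^+ 2) /\
  (forall i, A i 0 ^+ 2 + A i 1 ^+ 2 >= p * rowsum A i ^+ 2).

From HB Require Import structures.
From mathcomp Require Import all_boot all_order all_algebra.
From mathcomp Require Import ring lra.
Set Implicit Arguments. Unset Strict Implicit. Unset Printing Implicit Defensive.
Import Order.TTheory GRing.Theory Num.Theory.
Local Open Scope ring_scope.

(* Write q := 4 - 2 sqrt 3 = 2 / (2 + sqrt 3). If A is in S(p) with p >= q, conditions (2) and
   (3), resp. (2) and (4), confine each column, resp. row, (x, y, z) of A to the cone
   sqrt 3 y + (sqrt 3 + 1) z <= x. Adding these cone inequalities for the first and last row
   and column gives sqrt 3 * sum A <= (2 + sqrt 3) (A11 + A22), so by (1)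
   (2 + sqrt 3) p <= 2 * sum A <= 2 = (2 + sqrt 3) q, i.e. p <= q. *)

Lemma sum_ord3 (V : nmodType) (f : 'I_3 -> V) : \sum_(i < 3) f i = f 0 + f 1 + f 2.
Proof.
rewrite !big_ord_recr big_ord0 /= add0r.
by congr (f _ + f _ + f _); apply: val_inj.
Qed.

Lemma colsum_tr (R : pzRingType) (A : 'M[R]_3) j : colsum A^T j = rowsum A j.
Proof. by apply: eq_bigr => i _; rewrite mxE. Qed.

Lemma rowsum_tr (R : pzRingType) (A : 'M[R]_3) i : rowsum A^T i = colsum A i.
Proof. by apply: eq_bigr => j _; rewrite mxE. Qed.

Lemma totsum_tr (R : pzRingType) (A : 'M[R]_3) : totsum A^T = totsum A.
Proof.
rewrite /totsum exchange_big; apply: eq_bigr => i _.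
by apply: eq_bigr => j _; rewrite mxE.
Qed.

Lemma in_S_tr (R : realFieldType) (p : R) (A : 'M[R]_3) : in_S p A -> in_S p A^T.
Proof.
move=> [A_ge0 [[diag_le tot_le] [col_half [row_half [col_sqr row_sqr]]]]].
split=> [i j|]; first by rewrite mxE.
rewrite totsum_tr !mxE; split=> //; split=> [j|]; last split=> [i|]; last split=> [j|i].
- by rewrite colsum_tr mxE.
- by rewrite rowsum_tr mxE.
- by rewrite colsum_tr !mxE.
- by rewrite rowsum_tr !mxE.
Qed.

Lemma sqr_cone_bound (R : realFieldType) (r x y s : R) : r ^+ 2 = 3 -> 0 < r ->
  0 <= y -> y <= s -> s <= x ->
  (4 - 2 * r) * (x + s) ^+ 2 <= x ^+ 2 + y ^+ 2 -> (r + 1) * s <= x + y.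
Proof.
move=> r_sqr r_gt0 y_ge0 y_le_s s_le_x sqr_le; rewrite leNgt; apply/negP => xy_lt.
have r_gt1 : 1 < r by nra.
have r_lt2 : r < 2 by nra.
(* y is below (r + 1) s - x, resp. below s, according as x >= r s or not; in both
   regimes r ^+ 2 = 3 factors the gap between the two sides of sqr_le. *)
have [rs_le_x | x_lt_rs] := lerP (r * s) x.
- have E : (4 - 2 * r) * (x + s) ^+ 2 - x ^+ 2 - ((r + 1) * s - x) ^+ 2
      = 2 * ((2 * s - (r - 1) * x) * (x - r * s)) + (3 - r ^+ 2) * (s ^+ 2 + 2 * x * s).
    by ring.
  rewrite r_sqr subrr mul0r addr0 in E.
  have : 0 <= (2 * s - (r - 1) * x) * (x - r * s).
    by apply: mulr_ge0; nra.
  have : y ^+ 2 < ((r + 1) * s - x) ^+ 2 by nra.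
  nra.
- have E : (4 - 2 * r) * (x + s) ^+ 2 - x ^+ 2 - s ^+ 2
      = (2 - r) * ((r * s - x) * (r * x - s)) + (r ^+ 2 - 3) * (x * s * (r - 2) - s ^+ 2 - x ^+ 2).
    by ring.
  rewrite r_sqr subrr mul0r addr0 in E.
  have : 0 < (2 - r) * ((r * s - x) * (r * x - s)).
    have s_gt0 : 0 < s by nra.
    by apply: mulr_gt0; [lra | apply: mulr_gt0; nra].
  have : y ^+ 2 <= s ^+ 2 by nra.
  nra.
Qed.

Lemma in_S_row_cone (R : realFieldType) (r p : R) (A : 'M[R]_3) i :
  r ^+ 2 = 3 -> 0 < r -> 4 - 2 * r <= p -> in_S p A ->
  r * A i 1 + (r + 1) * A i 2 <= A i 0.
Proof.
move=> r_sqr r_gt0 p_ge [A_ge0 [_ [_ [row_half [_ row_sqr]]]]].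
have := row_half i; have := row_sqr i; rewrite /rowsum sum_ord3 => sqr_ge half_le.
have Ai1_ge0 := A_ge0 i 1; have Ai2_ge0 := A_ge0 i 2.
suff : (r + 1) * (A i 1 + A i 2) <= A i 0 + A i 1 by lra.
apply: sqr_cone_bound => //; [lra | lra |].
rewrite addrA; apply: le_trans sqr_ge; apply: ler_wpM2r; [exact: sqr_ge0 | lra].
Qed.

Lemma in_S_col_cone (R : realFieldType) (r p : R) (A : 'M[R]_3) j :
  r ^+ 2 = 3 -> 0 < r -> 4 - 2 * r <= p -> in_S p A ->
  r * A 1 j + (r + 1) * A 2 j <= A 0 j.
Proof.
move=> r_sqr r_gt0 p_ge /in_S_tr A_in_S.
by have := in_S_row_cone j r_sqr r_gt0 p_ge A_in_S; rewrite !mxE.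
Qed.

Lemma in_S_p_bound (R : realFieldType) (r p : R) (A : 'M[R]_3) :
  r ^+ 2 = 3 -> 0 < r -> 4 - 2 * r <= p -> in_S p A -> (r + 2) * p <= 2.
Proof.
move=> r_sqr r_gt0 p_ge A_in_S.
have cone_row i := in_S_row_cone i r_sqr r_gt0 p_ge A_in_S.
have cone_col j := in_S_col_cone j r_sqr r_gt0 p_ge A_in_S.
have [A_ge0 [[diag_le tot_le] _]] := A_in_S.
have tot_diag : r * totsum A <= (r + 2) * (A 0 0 + A 1 1).
  have := cone_row 0; have := cone_row 2; have := cone_col 0; have := cone_col 2.
  have : 0 <= r * A 2 2 by apply: mulr_ge0; [exact: ltW | exact: A_ge0].
  rewrite /totsum sum_ord3 !sum_ord3.
  have := A_ge0 1 1; have := A_ge0 2 2.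
  lra.
have : (r + 2) * (A 0 0 + A 1 1 + p) <= (r + 2) * totsum A by rewrite ler_pM2l; lra.
lra.
Qed.

Theorem lemma24 (R : rcfType) (p : R) :
  4 - 2 * Num.sqrt 3 < p -> p <= 1 -> forall A : 'M[R]_3, ~ in_S p A.
Proof.
move=> p_gt _ A A_in_S; set r := Num.sqrt (3 : R) in p_gt.
have r_sqr : r ^+ 2 = 3 by rewrite sqr_sqrtr.
have r_gt0 : 0 < r by rewrite sqrtr_gt0.
have := in_S_p_bound r_sqr r_gt0 (ltW p_gt) A_in_S.
have : (r + 2) * (4 - 2 * r) < (r + 2) * p by rewrite ltr_pM2l // addr_gt0.
have -> : (r + 2) * (4 - 2 * r) = 8 - 2 * r ^+ 2 by ring.
rewrite r_sqr; lra.
Qed.
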